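(* In the setting of the context, \[ C_{I_0}(I)=\{(w_t,w_x)\in\mathbb{R}\oplus N_\mathbb{R} \mid \operatorname{trop}(g_j)(\varphi(w_x))+w_t\ \ge\ \operatorname{trop}(m_j)(\varphi(w_x))\ \text{ for all } j=1,\dots,c\}. \] Equivalently, $C_{I_0}(I)$ is the set of $(w_t,w_x)$ with $w_t+\langle u,w_x\rangle\ge0$ for every $j$ and every $u\in M$ such that $x^{A(u)}m_j$ is a monomial occurring in $g_j$.
   Context: Setting: let $N\cong\mathbb{Z}^n$, $M=\operatorname{Hom}(N,\mathbb{Z})$, with pairing $\langle\cdot,\cdot\rangle$. Let $\Delta\subset M_\mathbb{R}$ be a reflexive polytope, $\Sigma\subset N_\mathbb{R}$ its normal fan, and $Y=\mathbb{P}(\Delta)$. Write $\Sigma(1)$ for the set of rays, $\hat r$ for the primitive generator of $r$, and $D_r$ for the corresponding divisor. The Cox ring $S=\mathbb{C}[x_r\mid r\in\Sigma(1)]$ is graded by $A_{n-1}(Y)$ via $\deg\prod x_r^{a_r}=[\sum a_rD_r]$. We have $0\to M\xrightarrow{A}\mathbb{Z}^{\Sigma(1)}\to A_{n-1}(Y)\to 0$ with $A(u)=(\langle u,\hat r\rangle)_r$. Let $\Sigma(1)=J_1\cup\dots\cup J_c$ be a nef partition: a disjoint union such that each $E_j=\sum_{r\in J_j}D_r$ is Cartier and globally generated. Set $m_j=\prod_{r\in J_j}x_r$ and $I_0=\langle m_1,\dots,m_c\rangle$. Let $g_j\in S_{[E_j]}$ be a general linear combination, with generic nonzero coefficients, of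 all monomials of degree $[E_j]$ not in $I_0$. Let $I=\langle t g_j+m_j\mid j=1,\dots,c\rangle\subset\mathbb{C}[t]\otimes S$. Weights: for $w_x\in N_\mathbb{R}$, let $\varphi(w_x)\in\mathbb{R}^{\Sigma(1)}$ be any vector with $\sum_r\varphi(w_x)_r\hat r=w_x$. This is well defined modulo vectors inducing the same weight difference on any two monomials of equal degree. Tropicalization: for a polynomial $g=\sum_a c_ax^a$ with $c_a\in\mathbb{C}^*$, set $\operatorname{trop}(g)(\omega)=\min_a\langle a,\omega\rangle$ for $\omega\in\mathbb{R}^{\Sigma(1)}$. Order and cone: fix a monomial order $>$ on $\mathbb{C}[t]\otimes S$ that respects the Cox grading and is local in $t$. For $\omega=(\omega_t,\omega_x)\in\mathbb{R}\times\mathbb{R}^{\Sigma(1)}$, let $>_\omega$ compare monomials $t^kx^a$ first by the weight $k\omega_t+\langle a,\omega_x\rangle$ (larger weight is larger), breaking ties by $>$. Write $L_{>_\omega}(I)$ for the lead ideal. The Gröbner cone of special fiber weights $C_{I_0}(I)\subset\mathbb{R}\oplus N_\mathbb{R}$ is the closure of the cone \[ \{-(w_t,w_x) : L_{>_{(w_t,\varphi(w_x))}}(I)=I_0\cdot(\mathbb{C}[t]\otimes S)\}. \] *)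

From HB Require Import structures.
From mathcomp Require Import all_boot all_order all_algebra.
From mathcomp Require Import Rstruct.
From mathcomp Require Import complex.
From mathcomp Require Import mpoly.

Set Implicit Arguments.
Unset Strict Implicit.
Unset Printing Implicit Defensive.

Import Order.TTheory GRing.Theory Num.Theory.
Local Open Scope ring_scope.

Notation RR := Rdefinitions.R.
Notation CC := (complex Rdefinitions.R).

(** Conventions.
  - N = Z^n and M = Z^n with the standard dot pairing; N_R = M_R = R^n.
  - The rays of the normal fan Sigma of Delta are indexed by 'I_m; the
    primitive generator of ray r is [v r : 'I_n -> int].
  - Delta = { u in M_R | <u, v r> >= -1 for all r } (facet presentation).
  - The ring C[t] (x) S = C[t, x_r | r] is {mpoly CC[m.+1]}: the variable
    x_r is indexed by [xv r] and t by [tv] (the last index).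
  - A nef partition is a map [part : 'I_m -> 'I_c], J_j = part^-1(j). *)

Definition xv (m : nat) (r : 'I_m) : 'I_m.+1 := widen_ord (leqnSn m) r.
Definition tv (m : nat) : 'I_m.+1 := ord_max.

Definition pairR (n : nat) (w : 'I_n -> RR) (z : 'I_n -> int) : RR :=
  \sum_(i < n) w i * (z i)%:~R.
Definition pairZ (n : nat) (u z : 'I_n -> int) : int :=
  \sum_(i < n) u i * z i.

Definition Amap (n m : nat) (v : 'I_m -> 'I_n -> int) (u : 'I_n -> int)
  : 'I_m -> int := fun r => pairZ u (v r).

Definition in_Delta (n m : nat) (v : 'I_m -> 'I_n -> int) (u : 'I_n -> RR)
  : Prop := forall r, -1 <= pairR u (v r).

Definition active (n m : nat) (v : 'I_m -> 'I_n -> int) (u : 'I_n -> RR)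
  (r : 'I_m) : Prop := pairR u (v r) = -1.

(** The maximal cones of
   the normal fan are the cones sigma_u = cone{ v r | r active at u }. *)
Definition is_vertex (n m : nat) (v : 'I_m -> 'I_n -> int) (u : 'I_n -> RR)
  : Prop :=
  in_Delta v u /\
  (forall w : 'I_n -> RR, (forall r, active v u r -> pairR w (v r) = 0) ->
     forall i, w i = 0).

(** Delta = {u | <u, v r> >= -1} is a reflexive polytope whose facets are
   exactly the hyperplanes <u, v r> = -1 (so that the rays of its normal fan
   are exactly the cones R_{>=0} v r, with primitive generators v r):
   - Delta is bounded,
   - each inequality is irredundant (defines a facet),
   - all vertices of Delta are lattice points of M. *)
Definition reflexive_facets (n m : nat) (v : 'I_m -> 'I_n -> int) : Prop :=
  (exists B : RR, forall u, in_Delta v u -> forall i, `|u i| <= B) /\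
  (forall r, exists u : 'I_n -> RR,
      pairR u (v r) < -1 /\ (forall r', r' != r -> -1 <= pairR u (v r'))) /\
  (forall u, is_vertex v u -> forall i, exists z : int, u i = z%:~R).

(** The torus-invariant Weil divisor D = sum_r a r D_r is Cartier: on each
   maximal cone sigma_u there is m_sigma in M with <m_sigma, v r> = - a r for
   the rays r of sigma_u. *)
Definition cartier_divisor (n m : nat) (v : 'I_m -> 'I_n -> int)
  (a : 'I_m -> int) : Prop :=
  forall u, is_vertex v u ->
    exists msig : 'I_n -> int, forall r, active v u r -> pairZ msig (v r) = - a r.

(** The (Cartier) divisor D is globally generated (basepoint free):
   each m_sigma satisfies <m_sigma, v r> >= - a r for all rays r. *)
Definition globally_generated (n m : nat) (v : 'I_m -> 'I_n -> int)
  (a : 'I_m -> int) : Prop :=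
  forall u, is_vertex v u ->
    forall msig : 'I_n -> int, (forall r, active v u r -> pairZ msig (v r) = - a r) ->
      forall r, - a r <= pairZ msig (v r).

(** exponent vector of E_j = sum_{r in J_j} D_r *)
Definition eJ (m c : nat) (part : 'I_m -> 'I_c) (j : 'I_c) : 'I_m -> int :=
  fun r => ((part r == j) : nat)%:Z.

Definition nef_partition (n m c : nat) (v : 'I_m -> 'I_n -> int)
  (part : 'I_m -> 'I_c) : Prop :=
  (forall j, exists r, part r = j) /\
  (forall j, cartier_divisor v (eJ part j) /\ globally_generated v (eJ part j)).

Definition xexp (m : nat) (mu : 'X_{1..m.+1}) : 'I_m -> int :=
  fun r => (mu (xv r))%:Z.

(** equal Cox degree: a - b in A(M) *)
Definition same_degree (n m : nat) (v : 'I_m -> 'I_n -> int) (a b : 'I_m -> int)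
  : Prop := exists u : 'I_n -> int, forall r, a r - b r = Amap v u r.

Definition mj (m c : nat) (part : 'I_m -> 'I_c) (j : 'I_c) : {mpoly CC[m.+1]} :=
  \prod_(r < m | part r == j) 'X_(xv r).

Definition mon_in_I0 (m c : nat) (part : 'I_m -> 'I_c) (mu : 'X_{1..m.+1}) : Prop :=
  exists j, forall r, part r = j -> (0 < mu (xv r))%N.

Definition gmon (n m c : nat) (v : 'I_m -> 'I_n -> int) (part : 'I_m -> 'I_c)
  (j : 'I_c) (mu : 'X_{1..m.+1}) : Prop :=
  mu (tv m) = 0%N /\ same_degree v (xexp mu) (eJ part j) /\ ~ mon_in_I0 part mu.

Definition g_support (n m c : nat) (v : 'I_m -> 'I_n -> int) (part : 'I_m -> 'I_c)
  (g : 'I_c -> {mpoly CC[m.+1]}) : Prop :=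
  forall j mu, mu \in msupp (g j) <-> gmon v part j mu.

Definition in_I (m c : nat) (part : 'I_m -> 'I_c) (g : 'I_c -> {mpoly CC[m.+1]})
  (f : {mpoly CC[m.+1]}) : Prop :=
  exists h : 'I_c -> {mpoly CC[m.+1]},
    f = \sum_(j < c) h j * ('X_(tv m) * g j + mj part j).

(** [ord mu nu] means mu > nu.  A monomial order: strict total order
   compatible with multiplication of monomials. *)
Definition monomial_order (k : nat) (ord : rel 'X_{1..k}) : Prop :=
  (forall mu, ~~ ord mu mu) /\
  (forall mu nu la, ord mu nu -> ord nu la -> ord mu la) /\
  (forall mu nu, mu != nu -> ord mu nu || ord nu mu) /\
  (forall mu nu la, ord mu nu -> ord (mu + la)%MM (nu + la)%MM).

Definition local_in_t (m : nat) (ord : rel 'X_{1..m.+1}) : Prop :=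
  ord 0%MM U_(tv m)%MM.

(** respects the Cox grading: monomials are first compared by a positive
   real functional on the class group A_{n-1}(Y) (i.e. a functional l on
   Z^{Sigma(1)} vanishing on A(M), with l(D_r) > 0 for all r). *)
Definition respects_cox_grading (n m : nat) (v : 'I_m -> 'I_n -> int)
  (ord : rel 'X_{1..m.+1}) : Prop :=
  exists l : 'I_m -> RR,
    (forall r, 0 < l r) /\
    (forall i, \sum_(r < m) l r * (v r i)%:~R = 0) /\
    (forall mu nu : 'X_{1..m.+1}, \sum_(r < m) l r * (mu (xv r))%:R > \sum_(r < m) l r * (nu (xv r))%:R ->
       ord mu nu).

Definition wt (m : nat) (omt : RR) (omx : 'I_m -> RR) (mu : 'X_{1..m.+1}) : RR :=
  omt * (mu (tv m))%:R + \sum_(r < m) omx r * (mu (xv r))%:R.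

Definition gt_om (m : nat) (ord : rel 'X_{1..m.+1}) (omt : RR) (omx : 'I_m -> RR)
  (mu nu : 'X_{1..m.+1}) : Prop :=
  wt omt omx nu < wt omt omx mu \/ (wt omt omx mu = wt omt omx nu /\ ord mu nu).

Definition is_lead (m : nat) (ord : rel 'X_{1..m.+1}) (omt : RR) (omx : 'I_m -> RR)
  (mu0 : 'X_{1..m.+1}) (f : {mpoly CC[m.+1]}) : Prop :=
  mu0 \in msupp f /\ (forall nu, nu \in msupp f -> nu != mu0 -> gt_om ord omt omx mu0 nu).

(** L_{>_omega}(I) = I_0 (C[t] (x) S), as equality of monomial ideals
   (compared monomial by monomial). *)
Definition lead_ideal_is_I0 (m c : nat) (part : 'I_m -> 'I_c)
  (g : 'I_c -> {mpoly CC[m.+1]}) (ord : rel 'X_{1..m.+1})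
  (omt : RR) (omx : 'I_m -> RR) : Prop :=
  forall mu : 'X_{1..m.+1},
    (exists f, in_I part g f /\ f != 0 /\
        exists mu0, is_lead ord omt omx mu0 f /\ (mu0 <= mu)%MM)
    <-> mon_in_I0 part mu.

Definition is_phi (n m : nat) (v : 'I_m -> 'I_n -> int) (wx : 'I_n -> RR)
  (phi : 'I_m -> RR) : Prop :=
  forall i, \sum_(r < m) phi r * (v r i)%:~R = wx i.

(** the (non-closed) cone:  p = -(w_t, w_x) with L_{>_(w_t, phi(w_x))}(I) = I_0 *)
Definition precone (n m c : nat) (v : 'I_m -> 'I_n -> int) (part : 'I_m -> 'I_c)
  (g : 'I_c -> {mpoly CC[m.+1]}) (ord : rel 'X_{1..m.+1})
  (pt : RR) (px : 'I_n -> RR) : Prop :=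
  forall phi, is_phi v (fun i => - px i) phi ->
    lead_ideal_is_I0 part g ord (- pt) phi.

Definition in_closure (n : nat) (S : RR -> ('I_n -> RR) -> Prop)
  (pt : RR) (px : 'I_n -> RR) : Prop :=
  forall eps : RR, 0 < eps ->
    exists qt qx, S qt qx /\ `|pt - qt| < eps /\ (forall i, `|px i - qx i| < eps).

Definition groebner_cone_I0 (n m c : nat) (v : 'I_m -> 'I_n -> int)
  (part : 'I_m -> 'I_c) (g : 'I_c -> {mpoly CC[m.+1]}) (ord : rel 'X_{1..m.+1})
  (pt : RR) (px : 'I_n -> RR) : Prop :=
  in_closure (precone v part g ord) pt px.

Definition xdot (m : nat) (mu : 'X_{1..m.+1}) (om : 'I_m -> RR) : RR :=
  \sum_(r < m) (mu (xv r))%:R * om r.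

(** trop(f)(om) = min_{a in supp f} <a, om>, with value None (= +oo) for f = 0 *)
Definition trop (m : nat) (f : {mpoly CC[m.+1]}) (om : 'I_m -> RR) : option RR :=
  match msupp f with
  | [::] => None
  | a :: s => Some (foldr (fun b acc => Num.min (xdot b om) acc) (xdot a om) s)
  end.

Definition le_plus (x y : option RR) (s : RR) : Prop :=
  match x, y with
  | _, None => True
  | None, Some _ => False
  | Some a, Some b => a <= b + s
  end.

(** Zariski-genericity of the coefficients of (g_j)_j: the coefficient vector
   (g_j's coefficient at mu)_{(j,mu) : gmon j mu}, enumerated bijectively by
   [e], is not a zero of the nonzero polynomial [P]. *)
Definition enumerates_gmons (n m c : nat) (v : 'I_m -> 'I_n -> int)
  (part : 'I_m -> 'I_c) (N : nat) (e : 'I_N -> 'I_c * 'X_{1..m.+1}) : Prop :=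
  injective e /\ (forall j mu, gmon v part j mu <-> exists k, e k = (j, mu)).

Definition coeff_vector (m c N : nat) (e : 'I_N -> 'I_c * 'X_{1..m.+1})
  (g : 'I_c -> {mpoly CC[m.+1]}) : 'I_N -> CC :=
  fun k => (g (e k).1)@_((e k).2).

(* Write w for the weight (w_t, phi(w_x)).  If every monomial t x^b of t g_j is
   strictly lighter than m_j, the w-leading monomials of the generators
   t g_j + m_j are the pairwise coprime monomials m_j, and coprime leading
   monomials generate the leading ideal; over real weights this needs a descent
   on the finitely many weights that monomials of bounded Cox degree take in a
   bounded window.  Conversely, if the leading ideal is I_0, the leading
   monomial of t g_j + m_j lies in I_0, which the monomials of g_j avoid, so it
   is m_j and every t x^b is at most as heavy as m_j.  Writing x^b = x^(A u) m_j,
   the weight of t x^b minus that of m_j is w_t + <u, w_x>: the strict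
   inequalities describe the interior of the cone, the weak ones its closure. *)

From HB Require Import structures.
From mathcomp Require Import all_boot all_order all_algebra.
From mathcomp Require Import Rstruct complex mpoly.
From mathcomp Require Import ring lra zify.
From Stdlib Require Import ClassicalEpsilon FunctionalExtensionality.
Import Order.TTheory GRing.Theory Num.Theory.
Local Open Scope ring_scope.
Set Implicit Arguments.
Unset Strict Implicit.

Lemma seq_argmax (T : eqType) (s : seq T) (f : T -> RR) :
  s != [::] -> exists2 x, x \in s & forall y, y \in s -> f y <= f x.
Proof.
elim: s => [//|a [|b s] IH] _.
  by exists a; rewrite ?mem_seq1 // => y; rewrite mem_seq1 => /eqP->.
have [x xs Hx] := IH isT; have [le_ax|lt_xa] := leP (f a) (f x).
  exists x; first by rewrite in_cons xs orbT.
  by move=> y; rewrite in_cons => /orP[/eqP->//|/Hx].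
exists a; first by rewrite in_cons eqxx.
by move=> y; rewrite in_cons => /orP[/eqP->//|/Hx /le_trans]; apply; apply: ltW.
Qed.

Lemma seq_bound_lt (T : eqType) (s : seq T) (f : T -> RR) z :
  (forall x, x \in s -> f x < z) -> exists2 y, y < z & forall x, x \in s -> f x <= y.
Proof.
have [->|/(seq_argmax f) [x0 x0s Hx0] lt_z] := eqVneq s [::].
  by exists (z - 1) => //; rewrite gtrBl ltr01.
by exists (f x0); [apply: lt_z | apply: Hx0].
Qed.

Lemma seq_ub (T : eqType) (s : seq T) (f : T -> RR) :
  exists B, forall x, x \in s -> f x <= B.
Proof.
have [->|/(seq_argmax f) [x0 _ Hx0]] := eqVneq s [::]; first by exists 0.
by exists (f x0).
Qed.

(* Strong induction on a real parameter, measured by the number of elements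
   of a fixed finite set [s] below it. *)
Lemma real_count_ind (s : seq RR) (P : RR -> Prop) :
  (forall x, (forall y, (exists2 z, z \in s & y < z <= x) -> P y) -> P x) ->
  forall x, P x.
Proof.
move=> IH x; have [k] := ubnP (count (fun t => t <= x) s).
elim: k x => // k IHk x lt_xk; apply: IH => y [z zs /andP[lt_yz le_zx]].
apply: IHk; rewrite -ltnS; apply: leq_trans lt_xk; rewrite ltnS.
apply: (@leq_ltn_trans (count (fun t => t < z) s)).
  by apply: sub_count => t /le_lt_trans; apply.
apply: (@leq_trans (count (fun t => t <= z) s)).
  by have := count_lt_le_mem z s; rewrite zs.
by apply: sub_count => t /le_trans; apply.
Qed.

Section WeightedIdeal.
Variables (R : comNzRingType) (k : nat).
Local Notation MN := 'X_{1..k}.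
Local Notation MP := {mpoly R[k]}.
Variables (w L : MN -> RR).
Hypothesis wD : forall a b, w (a + b)%MM = w a + w b.
Hypothesis LD : forall a b, L (a + b)%MM = L a + L b.

Definition is_wmax (f : MP) mu :=
  mu \in msupp f /\ forall nu, nu \in msupp f -> w nu <= w mu.

Lemma wmax_exists (f : MP) : f != 0 -> exists mu, is_wmax f mu.
Proof.
by rewrite -msupp_eq0 => /(seq_argmax w) [mu muf Hmu]; exists mu.
Qed.

Lemma msuppM_wt_le (p q : MP) x y :
  (forall nu, nu \in msupp p -> w nu <= x) ->
  (forall nu, nu \in msupp q -> w nu <= y) ->
  forall nu, nu \in msupp (p * q) -> w nu <= x + y.
Proof.
move=> Hp Hq nu /msuppM_le/allpairsP [[a b] /= [Ha Hb ->]].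
by rewrite wD lerD ?Hp ?Hq.
Qed.

Lemma msuppM_wt_lt (p q : MP) x y :
  (forall nu, nu \in msupp p -> w nu <= x) ->
  (forall nu, nu \in msupp q -> w nu < y) ->
  forall nu, nu \in msupp (p * q) -> w nu < x + y.
Proof.
move=> Hp Hq nu /msuppM_le/allpairsP [[a b] /= [Ha Hb ->]].
by rewrite wD ler_ltD ?Hp ?Hq.
Qed.

Lemma msuppDr_out (p q : MP) nu :
  nu \notin msupp q -> (nu \in msupp (p + q)) = (nu \in msupp p).
Proof. by move=> /memN_msupp_eq0 q0; rewrite !mcoeff_msupp mcoeffD q0 addr0. Qed.

Lemma wmax_addl (f p : MP) mu mu0 :
  is_wmax (f + p) mu -> mu0 \in msupp f ->
  (forall nu, nu \in msupp p -> w nu <= w mu0) -> w mu <= w mu0 ->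
  is_wmax f mu0.
Proof.
move=> [_ mu_max] mu0f p_le le_mu; split=> // nu nuf; rewrite leNgt.
apply/negP => lt_nu; have nup : nu \notin msupp p.
  by apply/negP => /p_le; rewrite leNgt lt_nu.
have := mu_max nu; rewrite msuppDr_out // nuf => /(_ isT) le_nu.
by move: (le_lt_trans le_mu lt_nu); rewrite ltNge le_nu.
Qed.

Variables (c : nat) (M : 'I_c -> MN) (G : 'I_c -> MP).
Hypothesis G_lower : forall j b, b \in msupp (G j) -> w b < w (M j) /\ L b = L (M j).
Hypothesis M_coprime :
  forall j j', j != j' -> forall i, (M j i == 0%N) || (M j' i == 0%N).

Definition gen j : MP := 'X_[M j] + G j.

Definition in_ideal_lt i (f : MP) :=
  exists h : 'I_c -> MP, f = \sum_(j < c | (j < i)%N) h j * gen j.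

Lemma in_ideal_lt0 i : in_ideal_lt i 0.
Proof. by exists (fun _ => 0); rewrite big1 // => j _; rewrite mul0r. Qed.

Lemma in_ideal_ltD i f g : in_ideal_lt i f -> in_ideal_lt i g -> in_ideal_lt i (f + g).
Proof.
move=> [h1 ->] [h2 ->]; exists (fun j => h1 j + h2 j).
by rewrite -big_split /=; apply: eq_bigr => j _; rewrite mulrDl.
Qed.

Lemma in_ideal_ltMl i p f : in_ideal_lt i f -> in_ideal_lt i (p * f).
Proof.
move=> [h ->]; exists (fun j => p * h j).
by rewrite mulr_sumr; apply: eq_bigr => j _; rewrite mulrA.
Qed.

Lemma in_ideal_lt_gen i (j : 'I_c) : (j < i)%N -> in_ideal_lt i (gen j).
Proof.
move=> lt_ji; exists (fun j' => (j' == j)%:R).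
rewrite (bigD1 j) //= eqxx mul1r big1 ?addr0 // => j' /andP[_ /negbTE ->].
by rewrite mul0r.
Qed.

Lemma msupp_gen_wt j nu : nu \in msupp (gen j) -> w nu <= w (M j).
Proof.
move/msuppD_le; rewrite mem_cat msuppX mem_seq1 => /orP[/eqP->//|].
by move/G_lower => [/ltW].
Qed.

Definition reducible_below i z D (p : MP) :=
  exists2 q, in_ideal_lt i (p - q) &
    forall nu, nu \in msupp q -> w nu < z /\ L nu <= D.

Lemma reducible_below0 i z D : reducible_below i z D 0.
Proof. by exists 0 => [|nu]; rewrite ?subr0 ?msupp0 //; apply: in_ideal_lt0. Qed.

Lemma reducible_belowD i z D p p' :
  reducible_below i z D p -> reducible_below i z D p' -> reducible_below i z D (p + p').
Proof.
move=> [q Hq Hsq] [q' Hq' Hsq']; exists (q + q').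
  by rewrite opprD addrACA; apply: in_ideal_ltD.
by move=> nu /msuppD_le; rewrite mem_cat => /orP[/Hsq|/Hsq'].
Qed.

Lemma reducible_below_low i z D (a : R) nu :
  w nu < z -> L nu <= D -> reducible_below i z D (a *: 'X_[nu]).
Proof.
move=> lt_nu le_nu; exists (a *: 'X_[nu]); first by rewrite subrr; apply: in_ideal_lt0.
by move=> nu' /msuppZ_le; rewrite msuppX mem_seq1 => /eqP->.
Qed.

Lemma reducible_below_div i z D (a : R) nu (j : 'I_c) :
  (j < i)%N -> (M j <= nu)%MM -> w nu <= z -> L nu <= D ->
  reducible_below i z D (a *: 'X_[nu]).
Proof.
move=> lt_ji Mj_nu le_nu le_Lnu; set nu' := (nu - M j)%MM.
have nuE : nu = (nu' + M j)%MM by rewrite submK.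
exists (- (a *: 'X_[nu'] * G j)).
  have -> : a *: 'X_[nu] - - (a *: 'X_[nu'] * G j) = a *: 'X_[nu'] * gen j.
    by rewrite opprK /gen mulrDr -[_ * 'X_[M j]]scalerAl -mpolyXD -nuE.
  by apply: in_ideal_ltMl; apply: in_ideal_lt_gen.
move=> nu2; rewrite (perm_mem (msuppN _)) -scalerAl => /msuppZ_le.
move=> /msuppM_le/allpairsP [[b1 b2] /= [+ Hb2 ->]].
rewrite msuppX mem_seq1 => /eqP->; have [lt_b2 Lb2] := G_lower Hb2.
split; first by rewrite wD; apply: lt_le_trans le_nu; rewrite nuE wD ltrD2l.
by rewrite LD Lb2 -LD -nuE.
Qed.

Lemma reducible_below_top i z D h :
  (forall nu, nu \in msupp h -> w nu <= z /\ L nu <= D) ->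
  (forall nu, nu \in msupp h -> w nu = z -> exists2 j : 'I_c, (j < i)%N & (M j <= nu)%MM) ->
  reducible_below i z D h.
Proof.
move=> h_bound h_top; rewrite [h]mpolyE big_seq.
elim/big_ind: _ => [|p p'|nu nuh]; first exact: reducible_below0.
  exact: reducible_belowD.
have [le_nu le_Lnu] := h_bound _ nuh; case: (ltgtP (w nu) z) => [lt_nu||eq_nu].
- exact: reducible_below_low.
- by rewrite ltNge le_nu.
- have [j lt_ji Mj_nu] := h_top _ nuh eq_nu.
  exact: (@reducible_below_div _ _ _ _ _ j).
Qed.

Definition wmax_divisible i := forall f mu,
  in_ideal_lt i f -> is_wmax f mu -> exists2 j : 'I_c, (j < i)%N & (M j <= mu)%MM.

Section InductionStep.
Variables (i : nat) (kk : 'I_c).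
Hypothesis kk_i : kk = i :> nat.
Hypothesis IHi : wmax_divisible i.

Lemma mcoeff_mul_gen h mu :
  (forall nu, nu \in msupp h -> w nu + w (M kk) <= w mu) ->
  (h * gen kk)@_mu = (h * 'X_[M kk])@_mu.
Proof.
move=> h_le; rewrite /gen mulrDr mcoeffD [(h * G kk)@_mu]memN_msupp_eq0 ?addr0 //.
have hG_lt nu : nu \in msupp (h * G kk) -> w nu < w mu.
  rewrite -[w mu](subrK (w (M kk))); apply: msuppM_wt_lt => [nu' /h_le|nu' /G_lower []//].
  by rewrite lerBrDr.
by apply/negP => /hG_lt; rewrite ltxx.
Qed.

Lemma wmax_dominant f h mu :
  in_ideal_lt i f -> is_wmax (f + h * gen kk) mu ->
  (forall nu, nu \in msupp h -> w nu + w (M kk) <= w mu) ->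
  exists2 j : 'I_c, (j < i.+1)%N & (M j <= mu)%MM.
Proof.
move=> f_in mu_max h_le; have [hG0|hGn0] := eqVneq ((h * gen kk)@_mu) 0.
  have muf : mu \in msupp f.
    by move: mu_max.1; rewrite !mcoeff_msupp mcoeffD hG0 addr0.
  have [|j lt_ji Mj_mu] := IHi f_in (wmax_addl mu_max muf _ (lexx _)).
    rewrite -[w mu](subrK (w (M kk))).
    by apply: msuppM_wt_le => [nu' /h_le|]; [rewrite lerBrDr | exact: msupp_gen_wt].
  by exists j => //; apply: ltnW.
exists kk; first by rewrite kk_i.
move: hGn0; rewrite mcoeff_mul_gen // -mcoeff_msupp (perm_mem (msuppMX _ _)).
by move=> /mapP [nu _ ->]; apply/mnm_lepP => i'; rewrite mnmDE leq_addr.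
Qed.

Lemma top_monomial_divisible f h mu nu0 nu :
  in_ideal_lt i f -> is_wmax (f + h * gen kk) mu -> is_wmax h nu0 ->
  w mu < w nu0 + w (M kk) -> nu \in msupp h -> w nu = w nu0 ->
  exists2 j : 'I_c, (j < i)%N & (M j <= nu)%MM.
Proof.
move=> f_in [muf mu_max] [_ nu0_max] lt_mu nuh eq_nu.
set nu' := (M kk + nu)%MM.
have wnu' : w nu' = w nu0 + w (M kk) by rewrite wD eq_nu addrC.
have hG_nu' : (h * gen kk)@_nu' = h@_nu.
  rewrite mcoeff_mul_gen; first by rewrite /nu' mcoeffMX.
  by move=> nu2 /nu0_max; rewrite wnu' lerD2r.
have nu'f : nu' \notin msupp (f + h * gen kk).
  by apply/negP => /mu_max; rewrite wnu' leNgt lt_mu.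
have nu'_f : nu' \in msupp f.
  move: nu'f; rewrite !mcoeff_msupp mcoeffD hG_nu' negbK addr_eq0 => /eqP->.
  by rewrite oppr_eq0 -mcoeff_msupp.
have hG_le nu2 : nu2 \in msupp (h * gen kk) -> w nu2 <= w nu'.
  by rewrite wnu'; apply: msuppM_wt_le => [//|]; exact: msupp_gen_wt.
have le_mu : w mu <= w nu' by rewrite wnu' ltW.
have [j lt_ji Mj_nu'] := IHi f_in (wmax_addl (conj muf mu_max) nu'_f hG_le le_mu).
exists j => //; have jkk : j != kk by apply: contraTneq lt_ji => ->; rewrite kk_i ltnn.
apply/mnm_lepP => i'; move/mnm_lepP: Mj_nu' => /(_ i'); rewrite mnmDE.
by case/orP: (M_coprime jkk i') => /eqP->; rewrite ?add0n.
Qed.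

(* Either the heaviest monomials of [h * gen kk] survive in [f], or they cancel
   against [f'], in which case the top monomials of [h] are divisible by earlier
   leading monomials and can be rewritten away, lowering the top weight of [h]. *)
Lemma wmax_divisible_step f mu D hi (s : seq RR) :
  is_wmax f mu ->
  (forall nu, L nu <= D -> w mu - w (M kk) <= w nu -> w nu <= hi -> w nu \in s) ->
  forall x h f', (forall nu, nu \in msupp h -> [/\ w nu <= x, w nu <= hi & L nu <= D]) ->
  in_ideal_lt i f' -> f = f' + h * gen kk ->
  exists2 j : 'I_c, (j < i.+1)%N & (M j <= mu)%MM.
Proof.
move=> mu_max s_window x; elim/(@real_count_ind s): x => x IHx h f' h_bound f'_in fE.
have [h0|hn0] := eqVneq h 0.
  rewrite fE h0 mul0r addr0 in mu_max.
  have [j lt_ji Mj_mu] := IHi f'_in (mu_max : is_wmax f' mu).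
  by exists j => //; apply: ltnW.
have [nu0 nu0_max] := wmax_exists hn0; rewrite fE in mu_max.
have [le_B|lt_B] := leP (w nu0 + w (M kk)) (w mu).
  apply: (wmax_dominant f'_in mu_max) => nu /nu0_max.2 le_nu.
  by apply: le_trans le_B; rewrite lerD2r.
have [le_x le_hi le_D] := h_bound _ nu0_max.1.
have [q hq_in q_bound] : reducible_below i (w nu0) D h.
  apply: reducible_below_top => [nu nuh|].
    by split; [apply: nu0_max.2 | case: (h_bound _ nuh)].
  move=> nu nuh eq_nu; exact: (top_monomial_divisible f'_in mu_max nu0_max lt_B nuh eq_nu).
have [y lt_y q_le] := seq_bound_lt (fun nu nuq => (q_bound nu nuq).1).
apply: (IHx y _ q (f' + (h - q) * gen kk)).
- exists (w nu0); last by rewrite lt_y.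
  by apply: s_window => //; rewrite lerBlDr ltW.
- move=> nu nuq; have [lt_nu le_Lnu] := q_bound _ nuq.
  by split => //; [apply: q_le | apply: le_trans (ltW lt_nu) le_hi].
- by apply: in_ideal_ltD => //; rewrite mulrC; apply: in_ideal_ltMl.
- by rewrite fE mulrBl addrA subrK.
Qed.

End InductionStep.

Hypothesis window_finite : forall D lo hi : RR, exists s : seq RR,
  forall nu, L nu <= D -> lo <= w nu -> w nu <= hi -> w nu \in s.

Lemma wmax_divisible_all i : wmax_divisible i.
Proof.
elim: i => [|i IHi] f mu.
  by move=> [h ->] [+ _]; rewrite big_pred0 ?msupp0 // => j; rewrite ltn0.
move=> [h fE] mu_max; have [lt_ic|le_ci] := ltnP i c; last first.
  have [|j lt_ji Mj_mu] := IHi f mu _ mu_max; last by exists j => //; apply: ltnW.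
  exists h; rewrite fE; apply: eq_bigl => j.
  by rewrite ltnS (leq_trans (ltn_ord j) le_ci) (leq_trans (ltnW (ltn_ord j)) le_ci).
pose kk := Ordinal lt_ic.
have fE' : f = \sum_(j < c | (j < i)%N) h j * gen j + h kk * gen kk.
  rewrite fE (bigD1 kk) //= addrC; congr (_ + _); apply: eq_bigl => j.
  by rewrite ltnS -val_eqE /= andbC -ltn_neqAle.
have [D HD] := seq_ub (msupp (h kk)) L.
have [hi Hhi] := seq_ub (msupp (h kk)) w.
have [s s_window] := window_finite D (w mu - w (M kk)) hi.
apply: (@wmax_divisible_step i kk erefl IHi f mu D hi s mu_max s_window hi (h kk) _ _ _ fE').
- by move=> nu nuh; split; [apply: Hhi | apply: Hhi | apply: HD].
- by exists h.
Qed.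

Lemma ideal_wmax_divisible (h : 'I_c -> MP) f mu :
  f = \sum_(j < c) h j * gen j -> is_wmax f mu -> exists j, (M j <= mu)%MM.
Proof.
move=> fE mu_max; have [|j _ Mj_mu] := @wmax_divisible_all c f mu _ mu_max.
  by exists h; rewrite fE; apply: eq_bigl => j; rewrite ltn_ord.
by exists j.
Qed.

End WeightedIdeal.

Section CoxMonomials.
Variable m : nat.
Local Notation MN := 'X_{1..m.+1}.

Lemma tv_or_xv (i : 'I_m.+1) : i = tv m \/ exists r, i = xv r.
Proof.
case: (ltnP i m) => [lt_im|le_mi]; first by right; exists (Ordinal lt_im); apply: val_inj.
by left; apply: val_inj; apply/eqP; rewrite /= eqn_leq le_mi -ltnS ltn_ord.
Qed.

Lemma xv_inj : injective (@xv m).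
Proof. by move=> a b /(congr1 val) /= /val_inj. Qed.

Lemma xv_neq_tv r : (xv r == tv m) = false.
Proof. by apply/negbTE; rewrite -val_eqE /= neq_ltn ltn_ord. Qed.

Lemma xdotD (a b : MN) om : xdot (a + b)%MM om = xdot a om + xdot b om.
Proof.
by rewrite /xdot -big_split; apply: eq_bigr => r _; rewrite mnmDE natrD mulrDl.
Qed.

Lemma xdot_tU om : xdot U_(tv m)%MM om = 0.
Proof. by rewrite /xdot big1 // => r _; rewrite mnm1E eq_sym xv_neq_tv mul0r. Qed.

Lemma wtE omt omx (nu : MN) : wt omt omx nu = omt * (nu (tv m))%:R + xdot nu omx.
Proof. by congr (_ + _); apply: eq_bigr => r _; rewrite mulrC. Qed.

Lemma wtD omt omx (a b : MN) :
  wt omt omx (a + b)%MM = wt omt omx a + wt omt omx b.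
Proof. by rewrite !wtE xdotD mnmDE natrD; ring. Qed.

Lemma wt_tshift omt omx (b : MN) :
  b (tv m) = 0%N -> wt omt omx (U_(tv m) + b)%MM = omt + xdot b omx.
Proof. by move=> bt; rewrite wtE xdotD xdot_tU mnmDE mnm1E eqxx bt mulr1 add0r. Qed.

Lemma wt_tfree omt omx (nu : MN) : nu (tv m) = 0%N -> wt omt omx nu = xdot nu omx.
Proof. by move=> nut; rewrite wtE nut mulr0 add0r. Qed.

Section PartitionMonomials.
Variables (c : nat) (part : 'I_m -> 'I_c).

Definition mjm (j : 'I_c) : MN := (\sum_(r < m | part r == j) U_(xv r))%MM.

Lemma mj_X j : mj part j = 'X_[mjm j].
Proof. by rewrite /mj /mjm (big_morph _ (@mpolyXD _ _) (@mpolyX0 _ _)). Qed.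

Lemma mjm_xv j r : mjm j (xv r) = (part r == j).
Proof.
rewrite /mjm mnm_sumE big_mkcond (bigD1 r) //= mnm1E eqxx big1 ?addn0.
  by case: (part r == j).
by move=> r' ne_r'; rewrite mnm1E (inj_eq xv_inj) (negbTE ne_r'); case: ifP.
Qed.

Lemma mjm_tv j : mjm j (tv m) = 0%N.
Proof. by rewrite /mjm mnm_sumE big1 // => r _; rewrite mnm1E xv_neq_tv. Qed.

Lemma mjm_coprime j j' : j != j' -> forall i, (mjm j i == 0%N) || (mjm j' i == 0%N).
Proof.
move=> ne_jj' i; case: (tv_or_xv i) => [->|[r ->]]; first by rewrite mjm_tv.
by rewrite !mjm_xv; case: (eqVneq (part r) j) => [->|]; rewrite ?(negbTE ne_jj') ?orbT.
Qed.

Lemma mjm_le j (mu : MN) :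
  (mjm j <= mu)%MM <-> (forall r, part r = j -> (0 < mu (xv r))%N).
Proof.
split=> [/mnm_lepP Hle r Hr|Hpos]; first by move: (Hle (xv r)); rewrite mjm_xv Hr eqxx.
apply/mnm_lepP => i; case: (tv_or_xv i) => [->|[r ->]]; first by rewrite mjm_tv.
by rewrite mjm_xv; case: (eqVneq (part r) j) => // /Hpos.
Qed.

Lemma mon_in_I0E (mu : MN) : mon_in_I0 part mu <-> exists j, (mjm j <= mu)%MM.
Proof. by split=> [] [j /mjm_le]; exists j. Qed.

End PartitionMonomials.

Lemma xv_bounded (l : 'I_m -> RR) D : (forall r, 0 < l r) ->
  exists K, forall nu : MN, xdot nu l <= D -> forall r, (nu (xv r) < K)%N.
Proof.
move=> l_pos; exists (\sum_(r < m) Num.bound `|D / l r|).+1 => nu le_D r.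
have le_r : (nu (xv r))%:R * l r <= D.
  apply: le_trans le_D; rewrite /xdot (bigD1 r) //= lerDl.
  by apply: sumr_ge0 => r' _; rewrite mulr_ge0 // ltW.
have lt_r : (nu (xv r))%:R < (Num.bound `|D / l r|)%:R :> RR.
  apply: le_lt_trans (archi_boundP (normr_ge0 _)); apply: le_trans (ler_norm _).
  by rewrite ler_pdivlMr.
rewrite ltr_nat in lt_r; rewrite ltnS; apply: leq_trans (ltnW lt_r) _.
by rewrite (bigD1 r) //= leq_addr.
Qed.

Lemma window_abs_le (lo x hi : RR) : lo <= x -> x <= hi -> `|x| <= `|lo| + `|hi|.
Proof.
move=> le_lo le_hi; have := ler_norm hi; have := ler_norm (- lo); rewrite normrN.
have := normr_ge0 lo; have := normr_ge0 hi.
by rewrite ler_norml; lra.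
Qed.

(* For fixed degree [xdot nu l <= D] the x-part of [nu] ranges over a finite
   set, and so does the t-exponent once the weight lies in a bounded window. *)
Lemma wt_window_finite omt omx (l : 'I_m -> RR) : (forall r, 0 < l r) ->
  forall D lo hi : RR, exists s : seq RR, forall nu : MN,
    xdot nu l <= D -> lo <= wt omt omx nu -> wt omt omx nu <= hi -> wt omt omx nu \in s.
Proof.
move=> l_pos D lo hi; have [K HK] := xv_bounded D l_pos.
pose X := [seq \sum_(r < m) (val (a r))%:R * omx r | a : {ffun 'I_m -> 'I_K}].
have xdotX nu : xdot nu l <= D -> xdot nu omx \in X.
  move=> le_D; apply/mapP; exists [ffun r => Ordinal (HK nu le_D r)]; first by rewrite mem_enum.
  by apply: eq_bigr => r _; rewrite ffunE.
have [B HB] := seq_ub X (fun x => `|x|).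
pose T := Num.bound ((`|lo| + `|hi| + B) / `|omt|).
exists [seq omt * k%:R + x | k <- iota 0 T, x <- X] => nu le_D le_lo le_hi.
apply/allpairsP; exists (if omt == 0 then 0%N else nu (tv m), xdot nu omx); split.
- rewrite mem_iota add0n; case: eqP => // /eqP omt0.
  have B0 : 0 <= B by apply: le_trans (HB _ (xdotX _ le_D)).
  rewrite -(ltr_nat RR); apply: le_lt_trans (archi_boundP _); last first.
    by rewrite divr_ge0 // !addr_ge0.
  rewrite ler_pdivlMr ?normr_gt0 // /= -[X in X * _](ger0_norm (ler0n _ _)) -normrM mulrC.
  have -> : omt * (nu (tv m))%:R = wt omt omx nu - xdot nu omx by rewrite wtE addrK.
  apply: le_trans (ler_normB _ _) _.
  by rewrite lerD ?(window_abs_le le_lo le_hi) ?HB ?xdotX.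
- exact: xdotX.
- by rewrite /= wtE; case: eqP => [->|]; rewrite ?mul0r.
Qed.

End CoxMonomials.

Lemma seq_rel_max (T : eqType) (r : rel T) (s : seq T) :
  transitive r -> (forall x y, x != y -> r x y || r y x) -> s != [::] ->
  exists2 x, x \in s & forall y, y \in s -> y != x -> r x y.
Proof.
move=> r_trans r_total; elim: s => [//|a [|b s] IH] _.
  by exists a; rewrite ?mem_seq1 // => y; rewrite mem_seq1 => ->.
have [x xs Hx] := IH isT; have [r_ax|nr_ax] := boolP (r a x).
  exists a => [|y]; first by rewrite in_cons eqxx.
  rewrite in_cons => /orP[/eqP->|ys]; first by rewrite eqxx.
  by move=> _; case: (eqVneq y x) => [->//|yx]; apply: r_trans r_ax (Hx _ ys yx).
exists x => [|y]; first by rewrite in_cons xs orbT.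
rewrite in_cons => /orP[/eqP->|ys yx]; last exact: Hx.
by move=> ax; move: (r_total _ _ ax); rewrite (negbTE nr_ax).
Qed.

Section LeadingMonomials.
Variables (m c : nat) (part : 'I_m -> 'I_c) (g : 'I_c -> {mpoly CC[m.+1]}).
Variables (ord : rel 'X_{1..m.+1}) (omt : RR) (omx : 'I_m -> RR).
Local Notation MN := 'X_{1..m.+1}.
Local Notation w := (wt omt omx).

Lemma msupp_tMg j (b' : MN) :
  (b' \in msupp ('X_(tv m) * g j)) = (b' \in [seq (U_(tv m) + b)%MM | b <- msupp (g j)]).
Proof. by rewrite mulrC (perm_mem (msuppMX _ _)). Qed.

Lemma tU_neq_mjm j (b : MN) : (U_(tv m) + b)%MM != mjm part j.
Proof.
apply/eqP => /(congr1 (fun mu : MN => mu (tv m))).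
by rewrite mnmDE mnm1E eqxx mjm_tv add1n.
Qed.

Lemma mon_in_I0_tU (b : MN) : mon_in_I0 part (U_(tv m) + b)%MM -> mon_in_I0 part b.
Proof. by move=> [j Hj]; exists j => r /Hj; rewrite mnmDE mnm1E eq_sym xv_neq_tv. Qed.

Lemma lead_is_wmax (f : {mpoly CC[m.+1]}) mu0 : is_lead ord omt omx mu0 f -> is_wmax w f mu0.
Proof.
move=> [mu0f Hlead]; split=> // nu nuf; have [->//|ne] := eqVneq nu mu0.
by case: (Hlead _ nuf ne) => [/ltW|[->]].
Qed.

Lemma lead_ideal_I0_of_lt (l : 'I_m -> RR) : (forall r, 0 < l r) ->
  (forall j b, b \in msupp (g j) -> xdot b l = xdot (mjm part j) l) ->
  (forall j b, b \in msupp (g j) -> w (U_(tv m) + b)%MM < w (mjm part j)) ->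
  lead_ideal_is_I0 part g ord omt omx.
Proof.
move=> l_pos g_deg g_lt.
have tg_lower j b' : b' \in msupp ('X_(tv m) * g j) ->
    w b' < w (mjm part j) /\ xdot b' l = xdot (mjm part j) l.
  rewrite msupp_tMg => /mapP [b bg ->]; split; first exact: g_lt.
  by rewrite xdotD xdot_tU add0r (g_deg _ _ bg).
move=> mu; rewrite mon_in_I0E; split.
  move=> [f [[h fE] [_ [mu0 [mu0_lead le_mu0]]]]].
  have [|j Mj_mu0] := @ideal_wmax_divisible _ _ w (fun nu => xdot nu l)
      (@wtD m omt omx) (fun a b => xdotD a b l) c (mjm part) (fun j => 'X_(tv m) * g j)
      tg_lower (@mjm_coprime m c part) (wt_window_finite omt omx l_pos) h f mu0 _
      (lead_is_wmax mu0_lead).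
    by rewrite fE; apply: eq_bigr => j _; rewrite /gen mj_X addrC.
  by exists j; apply: lepm_trans Mj_mu0 le_mu0.
move=> [j Mj_mu]; set mu' := (mu - mjm part j)%MM.
pose f := 'X_[mu'] * ('X_(tv m) * g j + mj part j).
have fE : f = 'X_[mu] + 'X_[mu'] * ('X_(tv m) * g j).
  by rewrite /f mulrDr addrC mj_X -mpolyXD submK.
have low nu : nu \in msupp ('X_[mu'] * ('X_(tv m) * g j)) -> w nu < w mu.
  rewrite -[mu](submK Mj_mu) wtD; apply: (msuppM_wt_lt (@wtD m omt omx)).
    by move=> x; rewrite msuppX mem_seq1 => /eqP->.
  by move=> x /tg_lower [].
have muf : mu \in msupp f.
  rewrite fE msuppDr_out ?msuppX ?mem_seq1 //.
  by apply/negP => /low; rewrite ltxx.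
exists f; split.
  exists (fun i => if i == j then 'X_[mu'] else 0).
  by rewrite (bigD1 j) //= eqxx big1 ?addr0 // => i /negbTE ->; rewrite mul0r.
split; first by apply/eqP => f0; move: muf; rewrite f0 msupp0.
exists mu; split; last exact: lepm_refl.
split => // nu; rewrite fE => /msuppD_le; rewrite mem_cat msuppX mem_seq1.
by case/orP => [/eqP-> /eqP//|/low lt_nu _]; left.
Qed.

Hypothesis ord_monomial : monomial_order ord.

Definition gt_omb (x y : MN) := (w y < w x) || ((w x == w y) && ord x y).

Lemma gt_ombP x y : reflect (gt_om ord omt omx x y) (gt_omb x y).
Proof.
by apply: (iffP orP) => [[|/andP[/eqP]]|[|[->]]]; [left|right|left|rewrite eqxx; right].
Qed.

Lemma lead_exists (f : {mpoly CC[m.+1]}) : f != 0 -> exists mu0, is_lead ord omt omx mu0 f.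
Proof.
move: ord_monomial => [_ [ord_trans [ord_total _]]] fn0.
have [|||mu0 mu0f Hmu0] := @seq_rel_max _ gt_omb (msupp f); last 1 first.
- by exists mu0; split=> // nu nuf ne; apply/gt_ombP; apply: Hmu0.
- move=> y x z; rewrite /gt_omb.
  case/orP=> [H1|/andP[/eqP E1 O1]] /orP[H2|/andP[/eqP E2 O2]].
  + by rewrite (lt_trans H2 H1).
  + by rewrite -E2 H1.
  + by rewrite E1 H2.
  + by rewrite E1 E2 eqxx (ord_trans _ _ _ O1 O2) orbT.
- move=> x y ne; rewrite /gt_omb; case: (ltgtP (w x) (w y)) => //= _.
  exact: ord_total.
- by rewrite msupp_eq0.
Qed.

Lemma lead_ideal_I0_wt_le : lead_ideal_is_I0 part g ord omt omx ->
  (forall j b, b \in msupp (g j) -> ~ mon_in_I0 part b) ->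
  forall j b, b \in msupp (g j) -> w (U_(tv m) + b)%MM <= w (mjm part j).
Proof.
move=> lead_I0 g_out j b bg; pose F := 'X_(tv m) * g j + mj part j.
have mjm_F : mjm part j \notin msupp ('X_(tv m) * g j).
  by rewrite msupp_tMg; apply/mapP => [[b' _ /eqP]]; rewrite eq_sym (negbTE (tU_neq_mjm _ _)).
have F_mjm : mjm part j \in msupp F.
  by rewrite /F addrC msuppDr_out // mj_X msuppX mem_seq1.
have tb_F : (U_(tv m) + b)%MM \in msupp F.
  rewrite /F msuppDr_out ?msupp_tMg ?map_f // mj_X msuppX mem_seq1.
  exact: tU_neq_mjm.
have Fn0 : F != 0 by apply/eqP => F0; move: F_mjm; rewrite F0 msupp0.
have [mu0 mu0_lead] := lead_exists Fn0.
have mu0E : mu0 = mjm part j.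
  have mu0_I0 : mon_in_I0 part mu0.
    apply/(lead_I0 mu0); exists F; split; last by split=> //; exists mu0; split=> //; apply: lepm_refl.
    exists (fun i => (i == j)%:R); rewrite (bigD1 j) //= eqxx mul1r big1 ?addr0 //.
    by move=> i /negbTE ->; rewrite mul0r.
  move: mu0_lead.1; rewrite /F mj_X => /msuppD_le; rewrite mem_cat msuppX mem_seq1.
  case/orP => [|/eqP//]; rewrite msupp_tMg => /mapP [b' b'g mu0E].
  by move: mu0_I0; rewrite mu0E => /mon_in_I0_tU /(g_out _ _ b'g).
have := mu0_lead.2 _ tb_F; rewrite mu0E (negbTE (tU_neq_mjm _ _)).
by case=> // [/ltW|[->]].
Qed.

End LeadingMonomials.

Lemma le_foldr_min (T : Type) (F : T -> RR) (s : seq T) a x :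
  (x <= foldr (fun b acc => Num.min (F b) acc) a s) = (x <= a) && all (fun b => x <= F b) s.
Proof. by elim: s => [|b s IH] /=; rewrite ?andbT // le_min IH andbCA. Qed.

Lemma le_plus_tropP m x (f : {mpoly CC[m.+1]}) phi t :
  le_plus (Some x) (trop f phi) t <-> (forall b, b \in msupp f -> x <= xdot b phi + t).
Proof.
rewrite /trop; case: (msupp f) => [|a s] /=; first by split.
rewrite -lerBlDr le_foldr_min; split.
  move=> /andP[le_a /allP le_s] b; rewrite in_cons -lerBlDr.
  by case/orP => [/eqP->//|/le_s].
move=> le_b; rewrite lerBlDr le_b ?mem_head //=.
by apply/allP => b bs; rewrite lerBlDr le_b // in_cons bs orbT.
Qed.

Lemma trop_mj m c (part : 'I_m -> 'I_c) j phi :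
  trop (mj part j) phi = Some (xdot (mjm part j) phi).
Proof. by rewrite /trop mj_X msuppX. Qed.

Section LatticePoints.
Variables (n m c : nat) (v : 'I_m -> 'I_n -> int) (part : 'I_m -> 'I_c).
Local Notation MN := 'X_{1..m.+1}.

Lemma sum_Amap_phi wx phi (u : 'I_n -> int) : is_phi v wx phi ->
  \sum_(r < m) (Amap v u r)%:~R * phi r = pairR wx u.
Proof.
move=> phiP; rewrite /pairR /Amap /pairZ.
under eq_bigr do rewrite rmorph_sum mulr_suml.
rewrite exchange_big /=; apply: eq_bigr => i _; rewrite -phiP mulr_suml.
by apply: eq_bigr => r _; rewrite intrM; ring.
Qed.

Lemma xdot_lattice wx phi j (b : MN) u : is_phi v wx phi ->
  (forall r, xexp b r = Amap v u r + eJ part j r) ->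
  xdot b phi = xdot (mjm part j) phi + pairR wx u.
Proof.
move=> phiP bE; rewrite -(sum_Amap_phi u phiP) /xdot -big_split /=.
apply: eq_bigr => r _; have -> : ((b (xv r))%:R : RR) = (xexp b r)%:~R by [].
by rewrite bE intrD /eJ mjm_xv mulrDl addrC.
Qed.

Lemma gmon_lattice j (b : MN) : gmon v part j b ->
  exists u, forall r, xexp b r = Amap v u r + eJ part j r.
Proof. by move=> [_ [[u uE] _]]; exists u => r; rewrite -uE subrK. Qed.

Lemma gmon_xdot_ker (l : 'I_m -> RR) j (b : MN) :
  (forall i, \sum_(r < m) l r * (v r i)%:~R = 0) ->
  gmon v part j b -> xdot b l = xdot (mjm part j) l.
Proof.
move=> l_ker /gmon_lattice [u uE].
have -> := xdot_lattice (wx := fun _ => 0) _ uE => [|//].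
by rewrite /pairR big1 ?addr0 // => i _; rewrite mul0r.
Qed.

Lemma wt_tshiftB omt wx phi j (b : MN) u : is_phi v wx phi -> b (tv m) = 0%N ->
  (forall r, xexp b r = Amap v u r + eJ part j r) ->
  wt omt phi (U_(tv m) + b)%MM - wt omt phi (mjm part j) = omt + pairR wx u.
Proof.
move=> phiP bt bE; rewrite wt_tshift // wt_tfree ?mjm_tv //.
by rewrite (xdot_lattice phiP bE); ring.
Qed.

(* The rays span N_R: otherwise a nonzero w with <w, v r> = 0 for all r would
   make Delta contain the whole line R w. *)
Lemma rays_span : reflexive_facets v -> row_full (\matrix_(r, i) (v r i)%:~R : 'M[RR]_(m, n)).
Proof.
move=> [[B HB] _]; set V := \matrix_(r, i) _; apply/negPn/negP => V_nfull.
have lt_rank : (\rank V < n)%N by rewrite ltn_neqAle V_nfull rank_leq_col.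
have K0 : kermx V^T != 0.
  by rewrite -mxrank_eq0 mxrank_ker mxrank_tr subn_eq0 -ltnNge lt_rank.
have [i0 Ki0] : exists i0, row i0 (kermx V^T) != 0.
  apply/existsP; apply: contraR K0 => /existsPn K0; apply/eqP/row_matrixP => i.
  by rewrite row0; apply/eqP; move: (K0 i); rewrite negbK.
set z := row i0 _ in Ki0; have zV : z *m V^T = 0 by rewrite /z -row_mul mulmx_ker row0.
have [i1 zi1] : exists i1, z 0 i1 != 0.
  apply/existsP; apply: contraR Ki0 => /existsPn z0; apply/eqP/matrixP => a b.
  by rewrite (ord1 a) [RHS]mxE; apply/eqP; move: (z0 b); rewrite negbK.
have z_orth r : \sum_i z 0 i * (v r i)%:~R = 0.
  move/matrixP: zV => /(_ 0 r); rewrite !mxE => zVr; rewrite -[RHS]zVr.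
  by apply: eq_bigr => i _; rewrite !mxE.
pose lam := (`|B| + 1) / `|z 0 i1|.
have z_Delta : in_Delta v (fun i => lam * z 0 i).
  move=> r; rewrite /pairR (eq_bigr (fun i => lam * (z 0 i * (v r i)%:~R))).
    by rewrite -mulr_sumr z_orth mulr0 lerN10.
  by move=> i _; rewrite mulrA.
have := HB _ z_Delta i1; rewrite normrM /lam normf_div normr_id mulrAC.
rewrite -mulrA divff ?normr_eq0 // mulr1 ger0_norm ?addr_ge0 // => le_B.
by move: (le_trans le_B (ler_norm B)); rewrite gerDl ler10.
Qed.

Lemma phi_exists : reflexive_facets v -> forall wx, exists phi, is_phi v wx phi.
Proof.
move=> /rays_span V_full wx; have /submxP [x xE] := submx_full (\row_i wx i) V_full.
exists (fun r => x 0 r) => i; move/matrixP: xE => /(_ 0 i); rewrite !mxE => ->.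
by apply: eq_bigr => r _; rewrite mxE.
Qed.

End LatticePoints.

Lemma finite_pred_enum (T : eqType) (P : T -> Prop) (s : seq T) :
  (forall x, P x -> x \in s) ->
  exists N (e : 'I_N -> T), injective e /\ forall x, P x <-> exists k, e k = x.
Proof.
move=> P_s; pose t := [seq x <- undup s | if excluded_middle_informative (P x) then true else false].
have tP x : x \in t <-> P x.
  rewrite mem_filter mem_undup; case: excluded_middle_informative => Px /=.
    by split=> // _; rewrite P_s.
  by split.
exists (size t), (tnth (in_tuple t)); split.
  by apply/tuple_uniqP; rewrite filter_uniq ?undup_uniq.
move=> x; split=> [/tP xt|[k <-]]; last by apply/tP; apply: mem_tnth.
by exists (Ordinal (etrans (index_mem x t) xt)); rewrite (tnth_nth x) /= nth_index.
Qed.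

Section GeneratorMonomials.
Variables (n m c : nat) (v : 'I_m -> 'I_n -> int) (part : 'I_m -> 'I_c).
Local Notation MN := 'X_{1..m.+1}.

Definition xmonomial (a : 'I_m -> nat) : MN := (\sum_(r < m) U_(xv r) *+ a r)%MM.

Lemma xmonomial_xv a r : xmonomial a (xv r) = a r.
Proof.
rewrite /xmonomial mnm_sumE (bigD1 r) //= mulmnE mnm1E eqxx mul1n big1 ?addn0 //.
by move=> r' ne_r'; rewrite mulmnE mnm1E (inj_eq (@xv_inj m)) (negbTE ne_r').
Qed.

Lemma xmonomial_tv a : xmonomial a (tv m) = 0%N.
Proof. by rewrite /xmonomial mnm_sumE big1 // => r _; rewrite mulmnE mnm1E xv_neq_tv. Qed.

Lemma xmonomialE (b : MN) : b (tv m) = 0%N -> b = xmonomial (fun r => b (xv r)).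
Proof.
move=> bt; apply/mnmP => i; case: (tv_or_xv i) => [->|[r ->]].
  by rewrite xmonomial_tv.
by rewrite xmonomial_xv.
Qed.

Lemma pairR_intr (u : 'I_n -> int) r :
  pairR (fun i => (u i)%:~R) (v r) = (Amap v u r)%:~R.
Proof. by rewrite /pairR /Amap /pairZ rmorph_sum; apply: eq_bigr => i _; rewrite rmorphM. Qed.

(* The lattice point u of a monomial of degree [E_j] satisfies <u, r^> >= -1,
   so it lies in the bounded polytope Delta. *)
Lemma gmon_lattice_bounded : reflexive_facets v -> exists K, forall j b,
  gmon v part j b -> exists2 u, (forall r, xexp b r = Amap v u r + eJ part j r)
                              & forall i, (`|u i| < K)%N.
Proof.
move=> [[B HB] _]; exists (Num.bound B) => j b /gmon_lattice [u uE]; exists u => // i.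
have u_Delta : in_Delta v (fun i => (u i)%:~R).
  move=> r; rewrite pairR_intr; have : (-1 <= Amap v u r)%R.
    by move: (uE r); rewrite /xexp /eJ; case: (part r == j) => /=; lia.
  by rewrite -(ler_int RR).
have le_B := HB _ u_Delta i; rewrite -intr_norm in le_B.
have B0 : 0 <= B by apply: le_trans le_B; rewrite ler0z normr_ge0.
by rewrite -(ltr_nat RR) natr_absz; apply: le_lt_trans le_B (archi_boundP B0).
Qed.

Lemma gmons_finite : reflexive_facets v ->
  exists s : seq ('I_c * MN), forall j b, gmon v part j b -> (j, b) \in s.
Proof.
move=> /gmon_lattice_bounded [K HK].
pose box (a : {ffun 'I_n -> 'I_(K + K).+1}) i := ((val (a i))%:Z - K%:Z)%R.
exists [seq (j, xmonomial (fun r => absz (Amap v (box a) r + eJ part j r)))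
         | j <- enum 'I_c, a <- enum {ffun 'I_n -> 'I_(K + K).+1}].
move=> j b b_gmon; have [u uE u_lt] := HK _ _ b_gmon.
have a_lt i : (absz (u i + K%:Z)%R < (K + K).+1)%N by have := u_lt i; lia.
pose a := [ffun i => Ordinal (a_lt i)].
have boxE : box a = u by apply: functional_extensionality => i; rewrite /box ffunE /=; have := u_lt i; lia.
apply/allpairsP; exists (j, a); split; rewrite ?mem_enum //= boxE.
by rewrite [b in LHS](xmonomialE b_gmon.1); congr (_, xmonomial _); apply: functional_extensionality => r; rewrite -uE.
Qed.

Lemma gmons_enumerable : reflexive_facets v ->
  exists N (e : 'I_N -> 'I_c * MN), enumerates_gmons v part e.
Proof.
move=> /gmons_finite [s Hs].
have [N [e [e_inj eP]]] := @finite_pred_enum _ (fun p => gmon v part p.1 p.2) s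
  (fun '(j, b) => Hs j b).
by exists N, e; split=> // j mu; apply: (eP (j, mu)).
Qed.

End GeneratorMonomials.

Lemma pairRN n (wx : 'I_n -> RR) u : pairR (fun i => - wx i) u = - pairR wx u.
Proof. by rewrite /pairR -sumrN; apply: eq_bigr => i _; rewrite mulNr. Qed.

Lemma pairR_dist n (wx qx : 'I_n -> RR) (u : 'I_n -> int) eps :
  (forall i, `|wx i - qx i| < eps) ->
  `|pairR wx u - pairR qx u| <= eps * \sum_i `|(u i)%:~R : RR|.
Proof.
move=> near_x; rewrite /pairR -sumrB mulr_sumr; apply: le_trans (ler_norm_sum _ _ _) _.
apply: ler_sum => i _; rewrite -mulrBl normrM ler_wpM2r ?normr_ge0 //.
exact: ltW.
Qed.

Lemma ge0_of_approx (x C : RR) : 0 < C ->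
  (forall eps, 0 < eps -> - (eps * C) <= x) -> 0 <= x.
Proof.
move=> C0 x_approx; rewrite leNgt; apply/negP => x_neg.
have eps0 : 0 < - x / (C *+ 2) by rewrite divr_gt0 ?oppr_gt0 // mulrn_wgt0.
have := x_approx _ eps0; have -> : - x / (C *+ 2) * C = - x / 2.
  by field; rewrite ?pnatr_eq0 // lt0r_neq0.
lra.
Qed.

Section GroebnerCone.
Variables (n m c : nat) (v : 'I_m -> 'I_n -> int) (part : 'I_m -> 'I_c).
Variables (g : 'I_c -> {mpoly CC[m.+1]}) (ord : rel 'X_{1..m.+1}).
Hypothesis g_supp : g_support v part g.

Definition cone_ineqs (wt_ : RR) (wx : 'I_n -> RR) := forall j u,
  (exists mu, mu \in msupp (g j) /\ forall r, xexp mu r = Amap v u r + eJ part j r) ->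
  0 <= wt_ + pairR wx u.

Lemma g_gmon j b : b \in msupp (g j) -> gmon v part j b.
Proof. exact: (g_supp j b).1. Qed.

Lemma cone_ineqs_of_groebner wt_ wx : reflexive_facets v -> monomial_order ord ->
  groebner_cone_I0 v part g ord wt_ wx -> cone_ineqs wt_ wx.
Proof.
move=> v_refl ord_mon cone_w j u [mu [mug muE]].
pose C := 1 + \sum_i `|(u i)%:~R : RR|.
have C0 : 0 < C by rewrite ltr_pwDl ?sumr_ge0.
apply: (ge0_of_approx C0) => eps eps0.
have [qt [qx [pre_q [near_t near_x]]]] := cone_w eps eps0.
have [phi phiP] := phi_exists v_refl (fun i => - qx i).
have := lead_ideal_I0_wt_le ord_mon (pre_q phi phiP) (fun j b bg => (g_gmon bg).2.2) mug.
rewrite -subr_le0 (wt_tshiftB _ phiP (g_gmon mug).1 muE) pairRN => le_q.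
have := pairR_dist u near_x; rewrite ler_norml => /andP [le1 le2].
move: near_t => /ltr_normlP [lt1 lt2]; rewrite /C mulrDr mulr1; lra.
Qed.

Lemma groebner_of_cone_ineqs wt_ wx : respects_cox_grading v ord ->
  cone_ineqs wt_ wx -> groebner_cone_I0 v part g ord wt_ wx.
Proof.
move=> [l [l_pos [l_ker _]]] ineqs eps eps0.
exists (wt_ + eps / 2), wx; split; [|split].
- move=> phi phiP; apply: (lead_ideal_I0_of_lt _ l_pos) => j b /g_gmon b_gmon.
    exact: gmon_xdot_ker l_ker b_gmon.
  have [u uE] := gmon_lattice b_gmon.
  have := ineqs j u (ex_intro _ b (conj ((g_supp j b).2 b_gmon) uE)).
  by rewrite -subr_lt0 (wt_tshiftB _ phiP b_gmon.1 uE) pairRN; lra.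
- by rewrite opprD addrA subrr sub0r normrN ger0_norm; lra.
- by move=> i; rewrite subrr normr0.
Qed.

Lemma trop_ineqsE wt_ wx : reflexive_facets v ->
  (forall j phi, is_phi v wx phi -> le_plus (trop (mj part j) phi) (trop (g j) phi) wt_)
  <-> cone_ineqs wt_ wx.
Proof.
move=> v_refl; split=> [trop_le j u [mu [mug muE]]|ineqs j phi phiP].
  have [phi phiP] := phi_exists v_refl wx.
  have := trop_le j phi phiP; rewrite trop_mj le_plus_tropP => /(_ mu mug).
  by rewrite (xdot_lattice phiP muE); lra.
rewrite trop_mj le_plus_tropP => b bg; have [u uE] := gmon_lattice (g_gmon bg).
have := ineqs j u (ex_intro _ b (conj bg uE)).
by rewrite (xdot_lattice phiP uE); lra.
Qed.

End GroebnerCone.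

Unset Implicit Arguments.

Theorem mainTheorem3 (n m c : nat) (v : 'I_m -> 'I_n -> int) (part : 'I_m -> 'I_c) :
  reflexive_facets v ->
  nef_partition v part ->
  (* for general g_j: outside the zero locus of a nonzero polynomial P in the coefficients *)
  exists (N : nat) (e : 'I_N -> 'I_c * 'X_{1..m.+1}) (P : {mpoly CC[N]}),
    enumerates_gmons v part e /\ P != 0 /\
    forall g : 'I_c -> {mpoly CC[m.+1]},
      g_support v part g ->
      P.@[coeff_vector e g] != 0 ->
      forall ord : rel 'X_{1..m.+1},
        monomial_order ord -> local_in_t ord -> respects_cox_grading v ord ->
        forall (wt_ : RR) (wx : 'I_n -> RR),
          (groebner_cone_I0 v part g ord wt_ wx <->
             (forall (j : 'I_c) (phi : 'I_m -> RR), is_phi v wx phi ->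
                le_plus (trop (mj part j) phi) (trop (g j) phi) wt_)) /\
          (groebner_cone_I0 v part g ord wt_ wx <->
             (forall (j : 'I_c) (u : 'I_n -> int),
                (exists mu, mu \in msupp (g j) /\
                   forall r, xexp mu r = Amap v u r + eJ part j r) ->
                0 <= wt_ + pairR wx u)).
Proof.
(* The characterisation holds for every g with the prescribed support, so no
   genericity condition is needed and P can be taken to be 1. *)
move=> v_refl _; have [N [e e_enum]] := gmons_enumerable part v_refl.
exists N, e, 1; split=> //; split=> [|g g_supp _ ord ord_mon _ ord_cox wt_ wx].
  exact: oner_neq0.
have cone_iff : groebner_cone_I0 v part g ord wt_ wx <-> cone_ineqs v part g wt_ wx.
  split; [exact: cone_ineqs_of_groebner | exact: groebner_of_cone_ineqs].
split=> //; apply: iff_trans cone_iff _; apply: iff_sym; exact: trop_ineqsE.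
Qed.
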